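(* For every $n\ge1$, the map $\psi$ defined below is a well-defined bijection from $\mathcal{S}_n$ to $\mathfrak{R}_n$.
   Context: A snake of length $n$ is a word $p_1\cdots p_n$ with $p_i\in\{\pm1,\dots,\pm n\}$ such that: - $|p_1|\cdots|p_n|$ is a permutation of $[n]$; - $p_1>0$; - $p_1>p_2<p_3>p_4<\cdots$. Let $\mathcal{S}_n$ be the set of snakes of length $n$. A permutation $\pi\in\mathfrak{S}_{2n}$ is alternating if $\pi_1>\pi_2<\pi_3>\cdots$. It is rc-invariant if $\pi_{2n+1-i}=2n+1-\pi_i$ for all $i$. Let $\mathfrak{R}_n$ be the set of rc-invariant alternating permutations of $[2n]$. For $p\in\mathcal{S}_n$, define $\tilde p_i=n+p_i$ if $p_i>0$ and $\tilde p_i=n+1+p_i$ if $p_i<0$. Then $\psi(p)$ is the unique rc-invariant permutation of $[2n]$ such that: - if $n$ is odd, its first $n$ entries are $\tilde p_n\tilde p_{n-1}\cdots\tilde p_1$; - if $n$ is even, its last $n$ entries are $\tilde p_1\cdots\tilde p_n$. Example: $p=2\,1\,5\,\bar4\,\bar3$ (where $\bar k=-k$) gives $\psi(p)=3\,2\,10\,6\,7\,4\,5\,1\,9\,8$. *)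

From HB Require Import structures.
From mathcomp Require Import all_boot all_order all_algebra.
Set Implicit Arguments. Unset Strict Implicit. Unset Printing Implicit Defensive.
Import Order.TTheory GRing.Theory Num.Theory.

(* Words are lists; entries are indexed from 0 in Rocq, i.e. nth x0 s i here is
   s_{i+1} in the paper. *)

Definition down_up {d} {T : porderType d} (x0 : T) (s : seq T) : Prop :=
  forall i, i.+1 < size s ->
    if ~~ odd i then (nth x0 s i.+1 < nth x0 s i)%O
    else (nth x0 s i < nth x0 s i.+1)%O.

Definition snake (n : nat) (p : seq int) : Prop :=
  [/\ size p = n,
      perm_eq (map absz p) (iota 1 n),
      (0 < nth 0 p 0)%R &
      down_up 0%R p].

Definition is_perm_2n (n : nat) (pi : seq nat) : Prop :=
  perm_eq pi (iota 1 (2 * n)).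

Definition rc_invariant (n : nat) (pi : seq nat) : Prop :=
  size pi = 2 * n /\
  forall i, 1 <= i <= 2 * n ->
    nth 0 pi (2 * n + 1 - i).-1 = 2 * n + 1 - nth 0 pi i.-1.

Definition rc_alt (n : nat) (pi : seq nat) : Prop :=
  [/\ is_perm_2n n pi, rc_invariant n pi & down_up 0 pi].

Definition tilde (n : nat) (x : int) : nat :=
  if (0 < x)%R then n + absz x else n.+1 - absz x.

Definition psi_spec (n : nat) (p : seq int) (pi : seq nat) : Prop :=
  [/\ is_perm_2n n pi, rc_invariant n pi &
      if odd n then take n pi = rev (map (tilde n) p)
      else drop n pi = map (tilde n) p].

From HB Require Import structures.
From mathcomp Require Import all_boot all_order all_algebra zify lra.
Import Order.TTheory GRing.Theory Num.Theory.

(* Let q be p if n is odd and -p if n is even. Then psi(p) is the image of the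
   word  rev q ++ (-q)  under x |-> x~, an order isomorphism from the letters
   {+-1,...,+-n} onto [2n] with (-x)~ = 2n+1 - x~; the antisymmetry of that word
   is exactly rc-invariance. Its alternation reduces to that of its first half,
   which is p read backwards up to the sign absorbed in q, together with the
   middle comparison between q_1 and -q_1, which says p_1 > 0. It is a
   permutation of [2n] iff |p_1|...|p_n| is one of [n]. Finally an rc-invariant
   word is determined by either of its halves, which gives both the uniqueness
   in the definition of psi and the inverse map. *)

Definition alt_rel {d} {T : porderType d} (b : bool) (a c : T) : bool :=
  if b then (a < c)%O else (c < a)%O.

Lemma alt_rel_negb {d} {T : porderType d} b (a c : T) :
  alt_rel (~~ b) a c = alt_rel b c a.
Proof. by case: b. Qed.

Lemma alt_rel_opp (R : numDomainType) b (a c : R) :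
  alt_rel b (- a)%R (- c)%R = alt_rel b c a.
Proof. by case: b; rewrite /alt_rel /= ltrN2. Qed.

Lemma down_upE {d} {T : porderType d} (x0 : T) s :
  down_up x0 s <->
  forall i, i.+1 < size s -> alt_rel (odd i) (nth x0 s i) (nth x0 s i.+1).
Proof. by split=> H i /H; rewrite /alt_rel if_neg. Qed.

Lemma down_up_map {d d'} {T : porderType d} {T' : porderType d'}
    {f : T -> T'} x0 y0 {s} :
  {in s &, {mono f : x y / (x < y)%O}} ->
  down_up y0 (map f s) <-> down_up x0 s.
Proof.
move=> f_mono; rewrite !down_upE size_map.
have alt_f b i : i.+1 < size s -> alt_rel b (nth y0 (map f s) i) (nth y0 (map f s) i.+1)
                                 = alt_rel b (nth x0 s i) (nth x0 s i.+1).
  move=> lt_i; have lt_i' := ltnW lt_i.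
  by rewrite !(nth_map x0) //; case: b; rewrite /alt_rel f_mono ?mem_nth.
by split=> H i lt_i; have := H i lt_i; rewrite alt_f.
Qed.

Lemma uniq_map_inj_in {T1 T2 : eqType} {f : T1 -> T2} {s} :
  uniq (map f s) -> {in s &, injective f}.
Proof.
elim: s => //= a s IH /andP[fa us] x y; rewrite !inE.
move=> /orP[/eqP->|xs] /orP[/eqP->|ys] e //.
- by move: fa; rewrite e map_f.
- by move: fa; rewrite -e map_f.
- exact: IH.
Qed.

Lemma perm_iota_uniq m N (s : seq nat) :
  {subset s <= iota m N} -> size s = N -> perm_eq s (iota m N) = uniq s.
Proof.
move=> s_sub s_size; apply/idP/idP => [/perm_uniq->|s_uniq]; first exact: iota_uniq.
apply: uniq_perm => //; first exact: iota_uniq.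
by have [] := uniq_min_size s_uniq s_sub (eq_leq (etrans (size_iota m N) (esym s_size))).
Qed.

Lemma absz_eq_cases (x y : int) : absz x = absz y -> x = y \/ x = (- y)%R.
Proof. case: x => [a|a]; case: y => [b|b] /=; rewrite ?NegzE; lia. Qed.

Definition mirror {V : zmodType} (q : seq V) := rev q ++ map GRing.opp q.

Section Mirror.
Context {V : zmodType} (q : seq V).
Local Notation m := (size q).

Lemma size_mirror : size (mirror q) = 2 * m.
Proof. by rewrite size_cat size_rev size_map addnn mul2n. Qed.

Lemma nth_mirror_lo i : i < m -> nth 0%R (mirror q) i = nth 0%R q (m - i.+1).
Proof. by move=> lt_im; rewrite nth_cat size_rev lt_im nth_rev. Qed.

Lemma nth_mirror_hi i : m <= i < 2 * m -> nth 0%R (mirror q) i = (- nth 0%R q (i - m))%R.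
Proof.
move=> /andP[le_mi lt_i]; rewrite nth_cat size_rev ltnNge le_mi /=.
by rewrite (nth_map 0%R) // ltn_subLR // addnn -mul2n.
Qed.

Lemma nth_mirror_sym i : i < 2 * m ->
  nth 0%R (mirror q) (2 * m - i.+1) = (- nth 0%R (mirror q) i)%R.
Proof.
move=> lt_i; case: (ltnP i m) => le_im.
- rewrite nth_mirror_hi ?nth_mirror_lo //; last lia.
  by have -> : 2 * m - i.+1 - m = m - i.+1 by lia.
- rewrite nth_mirror_lo ?nth_mirror_hi ?opprK //; try lia.
  by have -> : m - (2 * m - i.+1).+1 = i - m by lia.
Qed.

Lemma take_mirror : take m (mirror q) = rev q.
Proof. by rewrite take_size_cat ?size_rev. Qed.

Lemma drop_mirror : drop m (mirror q) = map GRing.opp q.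
Proof. by rewrite drop_size_cat ?size_rev. Qed.

End Mirror.

(* The second half replays the first backwards, negated and at the same
   parity, so only comparisons starting in the first half matter. *)
Lemma down_up_mirror (R : numDomainType) (q : seq R) :
  down_up 0%R (mirror q) <->
  forall i, i < size q ->
    alt_rel (odd i) (nth 0%R (mirror q) i) (nth 0%R (mirror q) i.+1).
Proof.
rewrite down_upE size_mirror; set m := size q.
split=> H i lt_i; first by apply: H; lia.
case: (ltnP i m) => le_mi; first exact: H.
have /H : 2 * m - i.+2 < m by lia.
have -> : (2 * m - i.+2).+1 = 2 * m - i.+1 by lia.
rewrite !nth_mirror_sym ?alt_rel_opp; try by rewrite -/m; lia.
by have -> : odd (2 * m - i.+2) = odd i by rewrite oddB ?oddM /= ?negbK; lia.
Qed.

Lemma uniq_mirror (q : seq int) :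
  all (fun x => x != 0%R) q -> uniq (mirror q) = uniq (map absz q).
Proof.
move=> q_nz; rewrite /mirror cat_uniq rev_uniq (map_inj_uniq oppr_inj).
apply/idP/idP.
- move=> /and3P[q_uniq no_common _]; rewrite map_inj_in_uniq // => x y xq yq.
  move=> /absz_eq_cases [//|exy]; case/negP: no_common; apply/hasP.
  by exists x; rewrite ?mem_rev // exy map_f.
- move=> abs_uniq; have absz_inj := uniq_map_inj_in abs_uniq.
  rewrite (map_uniq abs_uniq) andbT /=; apply/hasP => -[_ /mapP[y yq ->]].
  rewrite mem_rev => Nyq; have /eqP[] := allP q_nz y yq.
  by have := absz_inj _ _ Nyq yq (abszN y); lia.
Qed.

Section Snakes.
Variable n : nat.

Definition letter (x : int) := (x != 0%R) && (absz x <= n).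

Definition untilde (m : nat) : int :=
  if n < m then Posz (m - n) else (- Posz (n.+1 - m))%R.

Ltac unfold_tilde :=
  rewrite /letter /tilde /untilde /=; repeat case: ifP => ? //=; try lia.

Lemma tilde_range x : letter x -> 1 <= tilde n x <= 2 * n.
Proof. by case: x => [[|k]|k]; unfold_tilde. Qed.

Lemma untilde_letter m : 1 <= m <= 2 * n -> letter (untilde m).
Proof. by unfold_tilde. Qed.

Lemma tildeK x : letter x -> untilde (tilde n x) = x.
Proof. by case: x => [[|k]|k]; unfold_tilde. Qed.

Lemma untildeK m : 1 <= m <= 2 * n -> tilde n (untilde m) = m.
Proof.
by rewrite /untilde; case: ifP => ? ?; rewrite /tilde; case: ifP; rewrite ?abszN /=; lia.
Qed.

Lemma letterN x : letter (- x)%R = letter x.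
Proof. by rewrite /letter oppr_eq0 abszN. Qed.

Lemma tildeN x : letter x -> tilde n (- x)%R = (2 * n).+1 - tilde n x.
Proof. by case: x => [[|k]|k]; unfold_tilde. Qed.

Lemma ltn_tilde x y : letter x -> letter y -> (tilde n x < tilde n y) = (x < y)%R.
Proof. by case: x => [[|k]|k]; case: y => [[|j]|j]; unfold_tilde. Qed.

Lemma tilde_inj x y : letter x -> letter y -> tilde n x = tilde n y -> x = y.
Proof. by move=> x_letter y_letter e; rewrite -[x]tildeK // e tildeK. Qed.

Lemma all_letter_perm_absz {p} : perm_eq (map absz p) (iota 1 n) -> all letter p.
Proof.
move=> p_perm; apply/allP => x /(map_f absz); rewrite (perm_mem p_perm) mem_iota.
by rewrite /letter; case: x => [[|k]|k] /=; lia.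
Qed.

Lemma rc_invariant_nth {a} : rc_invariant n a -> forall i, i < 2 * n ->
  nth 0 a i = (2 * n).+1 - nth 0 a (2 * n - i.+1).
Proof.
move=> [_ a_rc] i lt_i; have /a_rc : 1 <= 2 * n - i <= 2 * n by lia.
have -> : (2 * n + 1 - (2 * n - i)).-1 = i by lia.
have -> : (2 * n - i).-1 = 2 * n - i.+1 by lia.
by rewrite addn1.
Qed.

Lemma rc_invariant_eq_take {a b} : rc_invariant n a -> rc_invariant n b ->
  take n a = take n b -> a = b.
Proof.
move=> a_rc b_rc e; have [a_size _] := a_rc; have [b_size _] := b_rc.
have lo k : k < n -> nth 0 a k = nth 0 b k.
  by move=> lt_kn; rewrite -(nth_take 0 lt_kn) e nth_take.
apply: (@eq_from_nth _ 0); rewrite ?a_size ?b_size // => i lt_i.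
case: (ltnP i n) => le_ni; first exact: lo.
by rewrite (rc_invariant_nth a_rc) // (rc_invariant_nth b_rc) // lo //; lia.
Qed.

Lemma rc_invariant_eq_drop {a b} : rc_invariant n a -> rc_invariant n b ->
  drop n a = drop n b -> a = b.
Proof.
move=> a_rc b_rc e; have [a_size _] := a_rc; have [b_size _] := b_rc.
have hi k : n <= k -> nth 0 a k = nth 0 b k.
  by move=> le_nk; rewrite -(subnKC le_nk) -!nth_drop e.
apply: (@eq_from_nth _ 0); rewrite ?a_size ?b_size // => i lt_i.
case: (ltnP i n) => lt_in; last exact: hi.
by rewrite (rc_invariant_nth a_rc) // (rc_invariant_nth b_rc) // hi //; lia.
Qed.

Definition orient (p : seq int) := if odd n then p else map GRing.opp p.

Lemma orientK : involutive orient.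
Proof.
move=> p; rewrite /orient; case: (odd n) => //.
by rewrite -map_comp map_id_in // => x _ /=; rewrite opprK.
Qed.

Lemma size_orient p : size (orient p) = size p.
Proof. by rewrite /orient; case: ifP; rewrite ?size_map. Qed.

Lemma all_letter_orient p : all letter (orient p) = all letter p.
Proof.
by rewrite /orient; case: ifP => // _; rewrite all_map; apply: eq_all => x /=; rewrite letterN.
Qed.

Lemma map_absz_orient p : map absz (orient p) = map absz p.
Proof.
by rewrite /orient; case: ifP => // _; rewrite -map_comp; apply: eq_map => x /=; rewrite abszN.
Qed.

Lemma nth_orient p i : i < size p ->
  nth 0%R (orient p) i = if odd n then nth 0%R p i else (- nth 0%R p i)%R.
Proof. by rewrite /orient; case: ifP => // _ lt_i; rewrite (nth_map 0%R). Qed.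

Lemma all_letter_mirror q : all letter (mirror q) = all letter q.
Proof.
rewrite all_cat all_rev all_map -[RHS]andbb; congr andb.
by apply: eq_all => x /=; rewrite letterN.
Qed.

Definition psi p := map (tilde n) (mirror (orient p)).

Definition psi_inv pi := orient (rev (map untilde (take n pi))).

Section Psi.
Context {p : seq int}.
Hypotheses (p_size : size p = n) (p_letter : all letter p).

Let q_size : size (orient p) = n. Proof. by rewrite size_orient. Qed.
Let q_letter : all letter (mirror (orient p)).
Proof. by rewrite all_letter_mirror all_letter_orient. Qed.

Lemma rc_invariant_psi : rc_invariant n (psi p).
Proof.
split=> [|i /andP[i_gt0 le_i]]; first by rewrite size_map size_mirror q_size.
have lt_i : i.-1 < 2 * n by lia.
have -> : (2 * n + 1 - i).-1 = 2 * n - i.-1.+1 by lia.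
rewrite !(nth_map 0%R) ?size_mirror ?q_size; try lia.
have := nth_mirror_sym (orient p) i.-1; rewrite q_size => -> //.
rewrite tildeN ?addn1 //.
by apply: (allP q_letter); rewrite mem_nth // size_mirror q_size.
Qed.

Lemma perm_psi : is_perm_2n n (psi p) = perm_eq (map absz p) (iota 1 n).
Proof.
have q_nz : all (fun x => x != 0%R) (orient p).
  by apply: sub_all (_ : all letter _) => [x /andP[] //|]; rewrite all_letter_orient.
rewrite /is_perm_2n !perm_iota_uniq ?size_map ?size_mirror ?q_size ?p_size //.
- rewrite map_inj_in_uniq ?uniq_mirror ?map_absz_orient //.
  by move=> x y /(allP q_letter) ? /(allP q_letter) ?; apply: tilde_inj.
- by move=> _ /mapP[x /(allP p_letter) /andP[? ?] ->]; rewrite mem_iota; lia.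
- by move=> _ /mapP[x /(allP q_letter) /tilde_range ? ->]; rewrite mem_iota; lia.
Qed.

Lemma down_up_psi : 0 < n ->
  down_up 0 (psi p) <-> (0 < nth 0%R p 0)%R /\ down_up 0%R p.
Proof.
move=> n_gt0; set q := orient p.
have mono : {in mirror q &, {mono tilde n : x y / (x < y)%O}}.
  by move=> x y /(allP q_letter) ? /(allP q_letter) ?; apply: ltn_tilde.
rewrite (down_up_map 0%R 0 mono) down_up_mirror q_size (down_upE _ p) p_size.
have middle : alt_rel (odd n.-1) (nth 0%R (mirror q) n.-1) (nth 0%R (mirror q) n.-1.+1)
              = (0 < nth 0%R p 0)%R.
  rewrite prednK // nth_mirror_lo ?nth_mirror_hi ?q_size; try lia.
  rewrite prednK // !subnn nth_orient ?p_size //.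
  by case: n n_gt0 => // k _ /=; case: (odd k); rewrite /alt_rel /= ?opprK; lra.
have first_half j : j.+1 < n ->
    alt_rel (odd (n - j.+2)) (nth 0%R (mirror q) (n - j.+2))
                             (nth 0%R (mirror q) (n - j.+2).+1)
    = alt_rel (odd j) (nth 0%R p j) (nth 0%R p j.+1).
  move=> lt_jn; rewrite !nth_mirror_lo ?q_size; try lia.
  have -> : n - (n - j.+2).+1 = j.+1 by lia.
  have -> : n - (n - j.+2).+2 = j by lia.
  rewrite !nth_orient ?p_size; try lia.
  have -> : odd (n - j.+2) = odd n (+) odd j by rewrite oddB ?oddS //=; lia.
  by case: (odd n); rewrite /= ?alt_rel_negb ?alt_rel_opp.
split=> [H | [p0_gt0 H] i lt_in].
- split; first by rewrite -middle; apply: H; lia.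
  by move=> j lt_jn; rewrite -first_half //; apply: H; lia.
- have [->|ne] := eqVneq i n.-1; first by rewrite middle.
  have -> : i = n - (n - i.+2).+2 by lia.
  by rewrite first_half; [apply: H|]; lia.
Qed.

Lemma take_psi : take n (psi p) = map (tilde n) (rev (orient p)).
Proof. by rewrite /psi -map_take -[in take n _]q_size take_mirror. Qed.

Lemma psi_half : if odd n then take n (psi p) = rev (map (tilde n) p)
                 else drop n (psi p) = map (tilde n) p.
Proof.
rewrite take_psi /psi -map_drop -[in drop n _]q_size drop_mirror /orient.
case: (odd n); first by rewrite map_rev.
by rewrite (mapK opprK).
Qed.

Lemma psiK : psi_inv (psi p) = p.
Proof.
rewrite /psi_inv take_psi -map_comp map_rev revK.
rewrite map_id_in ?orientK // => x x_q /=; rewrite tildeK //.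
by apply: (allP q_letter); rewrite mem_cat mem_rev x_q.
Qed.

End Psi.

Lemma psi_specP p pi : size p = n -> perm_eq (map absz p) (iota 1 n) ->
  psi_spec n p pi <-> pi = psi p.
Proof.
move=> p_size p_perm.
have p_letter := all_letter_perm_absz p_perm.
have psi_rc := rc_invariant_psi p_size p_letter.
rewrite /psi_spec; split=> [[_ pi_rc pi_half] | ->]; last first.
  by split; [rewrite perm_psi | | exact: psi_half].
move: pi_half (psi_half p_size); case: (odd n) => [pi_take psi_take | pi_drop psi_drop].
- by apply: (rc_invariant_eq_take pi_rc psi_rc); rewrite pi_take psi_take.
- by apply: (rc_invariant_eq_drop pi_rc psi_rc); rewrite pi_drop psi_drop.
Qed.

Lemma rc_alt_psi p : 0 < n -> size p = n -> all letter p ->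
  rc_alt n (psi p) <-> snake n p.
Proof.
move=> n_gt0 p_size p_letter.
have psi_rc := rc_invariant_psi p_size p_letter.
have psi_du := down_up_psi p_size p_letter n_gt0.
rewrite /rc_alt /snake perm_psi //.
split=> [[? _ /psi_du[]] | [_ ? ? ?]]; first by split.
by split=> //; apply/psi_du.
Qed.

Section PsiInverse.
Context { pi : seq nat }.
Hypotheses (pi_perm : is_perm_2n n pi) (pi_rc : rc_invariant n pi).

Let pi_range m : m \in take n pi -> 1 <= m <= 2 * n.
Proof. by move=> /mem_take; rewrite (perm_mem pi_perm) mem_iota; lia. Qed.

Lemma size_psi_inv : size (psi_inv pi) = n.
Proof. by rewrite size_orient size_rev size_map size_takel // pi_rc.1; lia. Qed.

Lemma all_letter_psi_inv : all letter (psi_inv pi).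
Proof.
rewrite all_letter_orient all_rev all_map.
by apply/allP => m /pi_range; apply: untilde_letter.
Qed.

Lemma psi_invK : psi (psi_inv pi) = pi.
Proof.
apply: (rc_invariant_eq_take _ pi_rc).
  exact: (rc_invariant_psi size_psi_inv all_letter_psi_inv).
rewrite take_psi ?size_psi_inv // /psi_inv orientK revK -map_comp.
by rewrite map_id_in // => m /pi_range; apply: untildeK.
Qed.

End PsiInverse.

End Snakes.

Theorem theorem3p2 (n : nat) : 1 <= n ->
  [/\ (forall p, snake n p -> exists! pi, psi_spec n p pi),
      (forall p pi, snake n p -> psi_spec n p pi -> rc_alt n pi) &
      (forall pi, rc_alt n pi -> exists! p, snake n p /\ psi_spec n p pi)].
Proof.
move=> n_gt0; split.
- move=> p [p_size p_perm _ _]; exists (psi n p).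
  by split=> [|pi]; rewrite psi_specP.
- move=> p pi p_snake; have [p_size p_perm _ _] := p_snake.
  rewrite psi_specP // => ->; apply/rc_alt_psi => //; exact: all_letter_perm_absz.
- move=> pi pi_alt; have [pi_perm pi_rc _] := pi_alt; exists (psi_inv n pi).
  have p_size := size_psi_inv n pi_rc.
  have p_letter := all_letter_psi_inv n pi_perm.
  have pi_psi := psi_invK n pi_perm pi_rc.
  have p_snake : snake n (psi_inv n pi).
    by apply/rc_alt_psi => //; rewrite pi_psi.
  have [_ p_perm _ _] := p_snake.
  split=> [|p [[p_size' p_perm' _ _]]]; first by rewrite psi_specP.
  rewrite psi_specP // => ->.
  by rewrite psiK // (all_letter_perm_absz n p_perm').
Qed.
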